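(* If an affine bijection $\sigma:\mathcal{G}_N\to\mathcal{G}_N$ satisfies $\sigma(A_0)=A_0$ and $\sigma(A_\mu)=A_\mu$ for all $\mu=1,\ldots,N$, then $\sigma$ is the identity.
   Context: $\mathcal{G}_N$ is the set of real symmetric positive semi-definite $N\times N$ matrices with unit diagonal. $A_0$ is the all-ones $N\times N$ matrix, and for $\mu=1,\ldots,N$, $A_\mu=\mathbf{s}\mathbf{s}^\top$ where $\mathbf{s}\in\{\pm1\}^N$ has $s_\mu=-1$ and all other entries $+1$. *)

From HB Require Import structures.
From mathcomp Require Import all_boot all_order all_algebra.
From mathcomp Require Import reals.
Set Implicit Arguments. Unset Strict Implicit. Unset Printing Implicit Defensive.
Import Order.TTheory GRing.Theory Num.Theory.
Local Open Scope ring_scope.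

Definition psd (R : realType) (N : nat) (A : 'M[R]_N) : Prop :=
  forall x : 'cV[R]_N, 0 <= (x^T *m A *m x) 0 0.

Definition elliptope (R : realType) (N : nat) (A : 'M[R]_N) : Prop :=
  [/\ A^T = A, psd A & forall i : 'I_N, A i i = 1].

Definition A0 (R : realType) (N : nat) : 'M[R]_N := const_mx 1.

Definition svec (R : realType) (N : nat) (mu : 'I_N) : 'cV[R]_N :=
  \col_j (if j == mu then -1 else 1).

Definition Amu (R : realType) (N : nat) (mu : 'I_N) : 'M[R]_N :=
  svec R mu *m (svec R mu)^T.

Definition affine_bijection_on (R : realType) (N : nat)
    (sigma : 'M[R]_N -> 'M[R]_N) : Prop :=
  [/\ (forall X, elliptope X -> elliptope (sigma X)),
      (forall X Y, elliptope X -> elliptope Y -> sigma X = sigma Y -> X = Y),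
      (forall Y, elliptope Y -> exists2 X, elliptope X & sigma X = Y)
    & (forall X Y (t : R), elliptope X -> elliptope Y -> 0 <= t <= 1 ->
         sigma (t *: X + (1 - t) *: Y) = t *: sigma X + (1 - t) *: sigma Y)].

From HB Require Import structures.
From mathcomp Require Import all_boot all_order all_algebra.
From mathcomp Require Import reals.
From mathcomp Require Import ring lra.
Set Implicit Arguments. Unset Strict Implicit. Unset Printing Implicit Defensive.
Import Order.TTheory GRing.Theory Num.Theory.
Local Open Scope ring_scope.

(* The fixed points of [sigma] in G_N form a convex set containing A_0 and the
   A_mu.  First, every cut matrix [v v^T], [v] a sign vector, is fixed.  Write
   [v] as a combination of [1] and of the [s^(mu)] for the negative entries
   [mu] of [v]: the mean P of the corresponding fixed cuts dominates a positive
   multiple of [v v^T], so P lies strictly inside a segment of G_N ending at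
   [v v^T].  The entries equal to 1 cut out faces of G_N, hence [sigma (v v^T)]
   has an entry 1 wherever [v v^T] has, which puts it on the segment from
   [v v^T] to A_0; as [v v^T] is an extreme point, [sigma (v v^T) = v v^T].
   Averaging cuts over all sign vectors with [s_j = +-s_i] yields the fixed
   matrices [I +- (E_ij + E_ji)].  Finally, for X in G_N the mean over all
   pairs (i, j) of the fixed matrices [I + X_ij / 2 (E_ij + E_ji)] equals
   [X / N^2 + (1 - 1 / N^2) I], and affinity of [sigma] gives [sigma X = X]. *)

Lemma sum_CauchySchwarz (R : realDomainType) (I : Type) (r : seq I) (c y : I -> R) :
  (\sum_(i <- r) c i * y i) ^+ 2 <=
  (\sum_(i <- r) c i ^+ 2) * (\sum_(i <- r) y i ^+ 2).
Proof.
elim: r => [|a r IH]; first by rewrite !big_nil mul0r expr0n.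
rewrite !big_cons; move: IH.
set S := \sum_(i <- r) _; set C := \sum_(i <- r) _; set Y := \sum_(i <- r) _ => IH.
have C_ge0 : 0 <= C by apply: sumr_ge0 => i _; apply: sqr_ge0.
have Y_ge0 : 0 <= Y by apply: sumr_ge0 => i _; apply: sqr_ge0.
move: (C_ge0); rewrite le0r => /orP[/eqP C0 | C_gt0].
  rewrite C0 in IH *.
  have -> : S = 0 by apply/eqP; rewrite -sqrf_eq0 eq_le sqr_ge0 andbT; lra.
  by have := mulr_ge0 (sqr_ge0 (c a)) Y_ge0; nra.
(* [C (c_a^2 Y + y_a^2 C - 2 c_a y_a S) = c_a^2 (C Y - S^2) + (c_a S - y_a C)^2] *)
have := sqr_ge0 (c a * S - y a * C).
have : 0 <= c a ^+ 2 * (C * Y - S ^+ 2) by rewrite mulr_ge0 ?sqr_ge0 ?subr_ge0.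
nra.
Qed.

Lemma sum_sign_indicator (R : comPzRingType) (T : eqType) (s : seq T) (a : T) :
  uniq s ->
  \sum_(x <- s) (if a == x then -1 else 1 : R) = (size s)%:R - 2 * (a \in s)%:R.
Proof.
elim: s => [|b s IH]; first by rewrite big_nil mulr0 subr0.
rewrite big_cons in_cons /= -natr1 => /andP[b_notin_s s_uniq]; rewrite IH //.
by case: eqP => [->|_] /=; rewrite ?(negbTE b_notin_s) /=; ring.
Qed.

Section Mean.
Variables (R : numFieldType) (V : lmodType R).

Definition mean (I : Type) (r : seq I) (F : I -> V) : V :=
  (size r)%:R^-1 *: \sum_(i <- r) F i.

Lemma mean_cons (I : Type) (a : I) (r : seq I) (F : I -> V) : (0 < size r)%N ->
  mean (a :: r) F =
  (size r).+1%:R^-1 *: F a + (1 - (size r).+1%:R^-1) *: mean r F.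
Proof.
move=> r_gt0; rewrite /mean big_cons scalerDr scalerA /=; congr (_ + _).
have r_neq0 : (size r)%:R != 0 :> R by rewrite pnatr_eq0 -lt0n.
have r1_neq0 : (size r).+1%:R != 0 :> R by rewrite pnatr_eq0.
congr (_ *: _); rewrite -natr1 in r1_neq0 *; field.
by rewrite r_neq0 r1_neq0.
Qed.

Lemma convex_mean (P : V -> Prop) (I : eqType) (r : seq I) (F : I -> V) :
  (forall x y (t : R), P x -> P y -> 0 <= t <= 1 -> P (t *: x + (1 - t) *: y)) ->
  (0 < size r)%N -> {in r, forall i, P (F i)} -> P (mean r F).
Proof.
move=> convexP; elim: r => [//|a [|b r] IH _ PF].
  by rewrite /mean big_cons big_nil addr0 invr1 scale1r; apply: PF; rewrite inE.
rewrite mean_cons //; apply: convexP; first by apply: PF; rewrite inE eqxx.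
  by apply: IH => // i ri; apply: PF; rewrite inE ri orbT.
by rewrite invr_ge0 ler0n invf_le1 ?ltr0n ?ler1n.
Qed.

End Mean.

Section Elliptope.
Variables (R : realType) (N : nat).
Implicit Types (A X Y : 'M[R]_N) (u v x y : 'cV[R]_N).

Definition form A x y : R := (x^T *m A *m y) 0 0.

Lemma formDl A x y z : form A (x + y) z = form A x z + form A y z.
Proof. by rewrite /form linearD /= !mulmxDl mxE. Qed.

Lemma formDr A x y z : form A z (x + y) = form A z x + form A z y.
Proof. by rewrite /form mulmxDr mxE. Qed.

Lemma formZl A c x z : form A (c *: x) z = c * form A x z.
Proof. by rewrite /form linearZ /= -!scalemxAl mxE. Qed.

Lemma formZr A c x z : form A z (c *: x) = c * form A z x.
Proof. by rewrite /form -scalemxAr mxE. Qed.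

Lemma form_delta A i j : form A (delta_mx i 0) (delta_mx j 0) = A i j.
Proof. by rewrite /form trmx_delta -rowE -colE !mxE. Qed.

Lemma formD A B x y : form (A + B) x y = form A x y + form B x y.
Proof. by rewrite /form mulmxDr mulmxDl mxE. Qed.

Lemma formZ c A x y : form (c *: A) x y = c * form A x y.
Proof. by rewrite /form -scalemxAr -scalemxAl mxE. Qed.

Lemma form_sum (I : Type) (r : seq I) (F : I -> 'M[R]_N) x y :
  form (\sum_(i <- r) F i) x y = \sum_(i <- r) form (F i) x y.
Proof.
elim: r => [|a r IH]; last by rewrite !big_cons formD IH.
by rewrite !big_nil /form mulmx0 mul0mx mxE.
Qed.

Lemma form_outer u x : form (u *m u^T) x x = ((x^T *m u) 0 0) ^+ 2.
Proof.
rewrite /form !mulmxA -(mulmxA (x^T *m u)) mxE big_ord1 expr2; congr (_ * _).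
by rewrite -[u^T *m x]trmxK trmx_mul trmxK mxE.
Qed.

Lemma form_outer_sum_le (I : Type) (r : seq I) (c : I -> R) (w : I -> 'cV[R]_N) x :
  form ((\sum_(i <- r) c i *: w i) *m (\sum_(i <- r) c i *: w i)^T) x x <=
  (\sum_(i <- r) c i ^+ 2) * form (\sum_(i <- r) w i *m (w i)^T) x x.
Proof.
rewrite form_outer form_sum.
under [X in _ <= _ * X]eq_bigr => i _ do rewrite form_outer.
suff -> : (x^T *m \sum_(i <- r) c i *: w i) 0 0 = \sum_(i <- r) c i * (x^T *m w i) 0 0.
  exact: sum_CauchySchwarz.
by rewrite mulmx_sumr summxE; apply: eq_bigr => i _; rewrite -scalemxAr mxE.
Qed.

Lemma mean_outer_dominates (I : Type) (r : seq I) (c : I -> R) (w : I -> 'cV[R]_N) u :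
  (0 < size r)%N -> u = \sum_(i <- r) c i *: w i ->
  exists2 e : R, 0 < e &
    forall x, e * form (u *m u^T) x x <= form (mean r (fun i => w i *m (w i)^T)) x x.
Proof.
move=> r_gt0 ->; set K := \sum_(i <- r) c i ^+ 2; set m : R := (size r)%:R.
have K_ge0 : 0 <= K by apply: sumr_ge0 => i _; apply: sqr_ge0.
have m_gt0 : 0 < m by rewrite ltr0n.
have Km_ge0 : 0 <= K * m := mulr_ge0 K_ge0 (ltW m_gt0).
exists (1 + K * m)^-1; first by rewrite invr_gt0; lra.
move=> x; rewrite /mean formZ -/m.
have := form_outer_sum_le r c w x; rewrite -/K.
set F := form _ x x; set G := form _ x x => FKG.
have G_ge0 : 0 <= G.
  by rewrite /G form_sum sumr_ge0 // => i _; rewrite form_outer sqr_ge0.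
have eK : m^-1 - (1 + K * m)^-1 * K = (1 + K * m)^-1 / m.
  by field; rewrite !lt0r_neq0 //; lra.
apply: (le_trans (ler_wpM2l _ FKG)); first by rewrite invr_ge0; lra.
rewrite mulrA ler_wpM2r // -subr_ge0 eK.
by rewrite divr_ge0 ?invr_ge0 ?ltW //; lra.
Qed.

Lemma elliptope_sym X i j : elliptope X -> X j i = X i j.
Proof. by case=> XT _ _; rewrite -{1}XT mxE. Qed.

Lemma elliptope_diag X i : elliptope X -> X i i = 1.
Proof. by case=> _ _; apply. Qed.

Lemma elliptope_form_ge0 X x : elliptope X -> 0 <= form X x x.
Proof. by case=> _ + _; apply. Qed.

Lemma elliptope_entry_bound X i j : elliptope X -> -1 <= X i j <= 1.
Proof.
move=> XG; have := elliptope_form_ge0 (delta_mx i 0 + delta_mx j 0) XG.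
have := elliptope_form_ge0 (delta_mx i 0 - delta_mx j 0) XG.
rewrite -scaleN1r !(formDl, formDr, formZl, formZr, form_delta).
rewrite !elliptope_diag // (elliptope_sym i j XG).
by move=> h1 h2; apply/andP; split; lra.
Qed.

Lemma elliptope_row_eq X i j k : elliptope X -> X i j = 1 -> X i k = X j k.
Proof.
move=> XG Xij; set d := X i k - X j k.
(* The form of [X] at [e_i - e_j - d e_k] equals [- d ^+ 2]. *)
have := elliptope_form_ge0 (delta_mx i 0 - delta_mx j 0 - d *: delta_mx k 0) XG.
rewrite -!scaleN1r !(formDl, formDr, formZl, formZr, form_delta).
rewrite !elliptope_diag // (elliptope_sym i j XG) (elliptope_sym i k XG).
rewrite (elliptope_sym j k XG) Xij -/d => h.
have : d ^+ 2 <= 0 by move: h; rewrite /d; nra.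
by move=> d2; apply/eqP; rewrite -subr_eq0 -/d -sqrf_eq0 eq_le d2 sqr_ge0.
Qed.

Lemma elliptope_convex X Y (t : R) : elliptope X -> elliptope Y -> 0 <= t <= 1 ->
  elliptope (t *: X + (1 - t) *: Y).
Proof.
move=> [XT Xpsd Xd] [YT Ypsd Yd] /andP[t0 t1]; split.
- by rewrite linearD !linearZ /= XT YT.
- move=> x; rewrite -/(form _ x x) formD !formZ.
  by rewrite addr_ge0 // mulr_ge0 ?subr_ge0 //; [apply: Xpsd | apply: Ypsd].
- by move=> i; rewrite !mxE Xd Yd; lra.
Qed.

Definition signvec v : Prop := forall a, v a 0 = 1 \/ v a 0 = -1.

Lemma signvec_sqr v a : signvec v -> v a 0 ^+ 2 = 1.
Proof. by move=> /(_ a) [] ->; rewrite ?sqrrN expr1n. Qed.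

Lemma signvecN v : signvec v -> signvec (- v).
Proof.
by move=> sv a; rewrite mxE; case: (sv a) => ->; rewrite ?opprK; [right | left].
Qed.

Lemma signvec_svec mu : signvec (svec R mu).
Proof. by move=> a; rewrite mxE; case: eqP; [right | left]. Qed.

Lemma signvec_const1 : signvec (const_mx 1).
Proof. by move=> a; rewrite mxE; left. Qed.

Lemma elliptope_cut v : signvec v -> elliptope (v *m v^T).
Proof.
move=> sv; split.
- by rewrite trmx_mul trmxK.
- by move=> x; rewrite -/(form _ x x) form_outer sqr_ge0.
- by move=> i; rewrite mxE big_ord1 mxE -expr2 signvec_sqr.
Qed.

Lemma A0_cut : A0 R N = const_mx 1 *m (const_mx 1 : 'cV[R]_N)^T.
Proof. by apply/matrixP => a b; rewrite !mxE big_ord1 !mxE mulr1. Qed.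

Definition neg_support v : seq 'I_N := enum [pred mu | v mu 0 == -1].

Lemma signvec_decomp v : signvec v ->
  v = (1 - (size (neg_support v))%:R) *: const_mx 1 +
      \sum_(mu <- neg_support v) svec R mu.
Proof.
move=> sv; apply/matrixP => d k; rewrite (ord1 k) !mxE summxE.
under eq_bigr => mu _ do rewrite mxE.
rewrite sum_sign_indicator ?enum_uniq // mem_enum inE.
by case: (sv d) => ->; case: eqP => /=; lra.
Qed.

Lemma elliptope_cut_blocks v Y a0 b0 : signvec v -> elliptope Y ->
  v a0 0 = 1 -> v b0 0 = -1 -> (forall a b, v a 0 = v b 0 -> Y a b = 1) ->
  let t := (1 + Y a0 b0) / 2 in Y = t *: A0 R N + (1 - t) *: (v *m v^T).
Proof.
move=> sv YG va0 vb0 Ysame t.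
have Ycross a b : v a 0 = 1 -> v b 0 = -1 -> Y a b = Y a0 b0.
  move=> va vb.
  rewrite (elliptope_row_eq _ YG (Ysame a a0 _)); last by rewrite va va0.
  rewrite (elliptope_sym b a0 YG) (elliptope_row_eq _ YG (Ysame b b0 _)).
    exact: elliptope_sym.
  by rewrite vb vb0.
apply/matrixP => a b; rewrite !mxE big_ord1 !mxE /t.
case: (sv a) => va; case: (sv b) => vb; rewrite va vb.
- by rewrite Ysame ?va ?vb //; lra.
- by rewrite Ycross //; lra.
- by rewrite (elliptope_sym _ a YG) Ycross //; lra.
- by rewrite Ysame ?va ?vb //; lra.
Qed.

End Elliptope.

Section PairMatrices.
Variables (R : realType) (N : nat).
Implicit Types (i j : 'I_N) (X : 'M[R]_N).

Definition pair_mx i j (c : R) : 'M[R]_N :=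
  \matrix_(a, b) if a == b then 1 else c * (delta_mx i j + delta_mx j i) a b.

Lemma pair_mx0 i j : pair_mx i j 0 = 1%:M.
Proof. by apply/matrixP => a b; rewrite !mxE mul0r; case: eqP. Qed.

Lemma pair_mx_convex i j (c : R) :
  pair_mx i j c =
  ((1 + c) / 2) *: pair_mx i j 1 + (1 - (1 + c) / 2) *: pair_mx i j (-1).
Proof. by apply/matrixP => a b; rewrite !mxE; case: eqP => _; lra. Qed.

Lemma sum_sign_mul a b :
  \sum_(s : {ffun 'I_N -> bool}) (-1) ^+ s a * (-1) ^+ s b =
  (a == b)%:R * #|{ffun 'I_N -> bool}|%:R :> R.
Proof.
case: eqVneq => [<-|ab].
  by rewrite mul1r -sumr_const; apply: eq_bigr => s _; rewrite -signr_addb addbb.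
pose flip (s : {ffun 'I_N -> bool}) := [ffun k => (k == a) (+) s k].
have flipK : involutive flip.
  by move=> s; apply/ffunP => k; rewrite !ffunE addbA addbb.
rewrite mul0r; apply/eqP; rewrite -[_ == 0](mulrn_eq0 _ 2) mulr2n.
rewrite [X in X + _ == 0](reindex_inj (inv_inj flipK)) -big_split /=.
rewrite big1 // => s _; rewrite !ffunE eqxx eq_sym (negbTE ab) /= signrN.
by rewrite mulNr addNr.
Qed.

(* Coordinate [j] copies coordinate [i], up to the sign [e]. *)
Definition pair_sign i j (e : R) (s : {ffun 'I_N -> bool}) : 'cV[R]_N :=
  \col_k ((if k == j then e else 1) * (-1) ^+ s (if k == j then i else k)).

Lemma signvec_pair_sign i j (e : R) s :
  e = 1 \/ e = -1 -> signvec (pair_sign i j e s).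
Proof.
move=> e_sign k; rewrite mxE; case: e_sign => ->; case: (s _); case: eqP => _;
  rewrite ?mulr1 ?mul1r ?mulrNN ?mulr1; by [left | right].
Qed.

Lemma pair_mx_mean i j (e : R) : e = 1 \/ e = -1 ->
  pair_mx i j e = mean (enum {ffun 'I_N -> bool})
                       (fun s => pair_sign i j e s *m (pair_sign i j e s)^T).
Proof.
move=> e_sign; apply/matrixP => a b.
rewrite /mean -cardT big_enum /= !mxE summxE.
under eq_bigr => s _ do rewrite mxE big_ord1 !mxE mulrACA.
rewrite -big_distrr sum_sign_mul /= mulrCA [_ * #|_|%:R]mulrC mulKf; last first.
  by rewrite pnatr_eq0 -lt0n; apply/card_gt0P; exists [ffun=> false].
have e2 : e * e = 1 by case: e_sign => ->; rewrite ?mulrNN mulr1.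
case: (eqVneq a b) => [<-|ab]; first by rewrite eqxx mulr1; case: eqP; rewrite ?mulr1.
case: (eqVneq a j) => [aj|aj]; case: (eqVneq b j) => [bj|bj].
- by rewrite aj bj eqxx in ab.
- by rewrite andbF add0r mulr1 eq_sym.
- by rewrite andbT addr0 mul1r.
- by rewrite andbF (negbTE ab) addr0 !mulr0.
Qed.

Lemma sum_delta_entry (F : 'I_N -> 'I_N -> R) a b :
  \sum_i \sum_j F i j * delta_mx i j a b = F a b.
Proof.
have := congr1 (fun A : 'M[R]_N => A a b) (matrix_sum_delta (\matrix_(i, j) F i j)).
rewrite !mxE summxE => ->; apply: eq_bigr => i _.
by rewrite summxE; apply: eq_bigr => j _; rewrite !mxE.
Qed.

Lemma mean_pair_mx X : elliptope X ->
  let t := (N * N)%:R^-1 in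
  mean (enum {: 'I_N * 'I_N}) (fun p => pair_mx p.1 p.2 (X p.1 p.2 / 2)) =
  t *: X + (1 - t) *: 1%:M.
Proof.
move=> XG t; apply/matrixP => a b.
rewrite /mean -cardT card_prod card_ord big_enum /= !mxE summxE.
rewrite -(pair_bigA _ (fun i j => pair_mx i j (X i j / 2) a b)) /=.
case: (eqVneq a b) => [<-|ab].
  under eq_bigr => i _ do under eq_bigr => j _ do rewrite mxE eqxx.
  rewrite !sumr_const card_ord -mulrnA mulVf ?elliptope_diag //= ?mulr1n; first lra.
  by rewrite pnatr_eq0 muln_eq0 orbb -lt0n (leq_ltn_trans _ (ltn_ord a)).
under eq_bigr => i _ do under eq_bigr => j _ do rewrite mxE (negbTE ab) mxE mulrDr.
rewrite (eq_bigr _ (fun i _ => big_split _ _ _ _ _)) big_split /=.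
rewrite sum_delta_entry exchange_big (sum_delta_entry (fun i j => X j i / 2)) /=.
by rewrite (elliptope_sym _ _ XG) /t; lra.
Qed.

End PairMatrices.

Section AffineBijection.
Variables (R : realType) (N : nat) (sigma : 'M[R]_N -> 'M[R]_N).
Hypothesis sigma_aff : affine_bijection_on sigma.
Implicit Types (C P X Y Z : 'M[R]_N).

Lemma sigma_elliptope X : elliptope X -> elliptope (sigma X).
Proof. by case: sigma_aff => + _ _ _; apply. Qed.

Lemma sigma_inj X Y : elliptope X -> elliptope Y -> sigma X = sigma Y -> X = Y.
Proof. by case: sigma_aff => _ + _ _; apply. Qed.

Lemma sigma_surj Y : elliptope Y -> exists2 X, elliptope X & sigma X = Y.
Proof. by case: sigma_aff => _ _ + _; apply. Qed.

Lemma sigma_convex X Y (t : R) : elliptope X -> elliptope Y -> 0 <= t <= 1 ->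
  sigma (t *: X + (1 - t) *: Y) = t *: sigma X + (1 - t) *: sigma Y.
Proof. by case: sigma_aff => _ _ _; apply. Qed.

Definition fixed X : Prop := elliptope X /\ sigma X = X.

Lemma fixed_convex X Y (t : R) : fixed X -> fixed Y -> 0 <= t <= 1 ->
  fixed (t *: X + (1 - t) *: Y).
Proof.
move=> [XG sX] [YG sY] t01; split; first exact: elliptope_convex.
by rewrite sigma_convex // sX sY.
Qed.

Lemma fixed_mean (I : eqType) (r : seq I) (F : I -> 'M[R]_N) :
  (0 < size r)%N -> {in r, forall i, fixed (F i)} -> fixed (mean r F).
Proof. by apply: convex_mean => X Y t; apply: fixed_convex. Qed.

(* [P] lies strictly inside the segment from [C] to [(1 + e) P - e C], which
   stays in the elliptope; [X a b = 1] cuts out a face of the elliptope. *)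
Lemma fixed_face_entry P C (e : R) a b : fixed P -> elliptope C -> 0 < e ->
  (forall x, e * form C x x <= form P x x) -> P a b = 1 -> sigma C a b = 1.
Proof.
move=> [PG sP] CG e_gt0 CleP Pab.
set Q := (1 + e) *: P + (- e) *: C.
have QG : elliptope Q.
  case: (PG) (CG) => PT Ppsd Pd [CT Cpsd Cd]; split.
  - by rewrite linearD !linearZ /= PT CT.
  - move=> x; rewrite -/(form _ x x) formD !formZ.
    have := mulr_ge0 (ltW e_gt0) (Ppsd x); have := CleP x.
    by rewrite -/(form _ x x); lra.
  - by move=> i; rewrite !mxE Pd Cd; lra.
set t := (1 + e)^-1.
have t01 : 0 <= t <= 1 by rewrite invr_ge0 invf_le1 ?ler_addl; lra.
have t_lt1 : t < 1 by rewrite invf_lt1; lra.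
have PQC : P = t *: Q + (1 - t) *: C.
  by apply/matrixP => i j; rewrite !mxE /t; field; rewrite lt0r_neq0 ?addr_gt0.
have := congr1 (fun M : 'M[R]_N => M a b) sP.
rewrite {1}PQC sigma_convex // Pab !mxE.
have /andP[_ Qab] := elliptope_entry_bound a b (sigma_elliptope QG).
have /andP[_ Cab] := elliptope_entry_bound a b (sigma_elliptope CG).
nra.
Qed.

(* Pulling back along [sigma] writes [C] as [t Z + (1 - t) X] with [X] in the
   elliptope, and the entry [-1] of [C] forces [t = 0]. *)
Lemma sigma_segment_eq0 Z C (t : R) a b : fixed Z -> elliptope C -> 0 <= t <= 1 ->
  sigma C = t *: Z + (1 - t) *: C -> Z a b = 1 -> C a b = -1 -> t = 0.
Proof.
move=> [ZG sZ] CG t01 sC Zab Cab.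
have [X XG sX] := sigma_surj CG.
have CZX : t *: Z + (1 - t) *: X = C.
  apply: sigma_inj => //; first exact: elliptope_convex.
  by rewrite sigma_convex // sZ sX.
have := congr1 (fun M : 'M[R]_N => M a b) CZX; rewrite !mxE Zab Cab.
have /andP[Xab _] := elliptope_entry_bound a b XG.
by case/andP: t01 => *; nra.
Qed.

End AffineBijection.

Section FixedCuts.
Variables (R : realType) (N : nat) (sigma : 'M[R]_N -> 'M[R]_N).
Hypothesis sigma_aff : affine_bijection_on sigma.
Hypothesis sigma_A0 : sigma (A0 R N) = A0 R N.
Hypothesis sigma_Amu : forall mu : 'I_N, sigma (Amu R mu) = Amu R mu.
Implicit Types (v : 'cV[R]_N).

Definition base_sign (o : option 'I_N) : 'cV[R]_N :=
  if o is Some mu then svec R mu else const_mx 1.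

Lemma fixed_base_cut o : fixed sigma (base_sign o *m (base_sign o)^T).
Proof.
case: o => [mu|]; split.
- exact/elliptope_cut/signvec_svec.
- exact: sigma_Amu.
- exact/elliptope_cut/signvec_const1.
- by rewrite /= -A0_cut.
Qed.

Lemma sigma_cut_entry1 v a b : signvec v -> v a 0 = 1 -> v b 0 = 1 ->
  sigma (v *m v^T) a b = 1.
Proof.
move=> sv va vb.
pose r := None :: map Some (neg_support v).
pose c (o : option 'I_N) : R :=
  if o is None then 1 - (size (neg_support v))%:R else 1.
have v_comb : v = \sum_(o <- r) c o *: base_sign o.
  rewrite big_cons big_map {1}(signvec_decomp sv); congr (_ + _).
  by apply: eq_bigr => mu _; rewrite scale1r.
have base1 o d : o \in r -> v d 0 = 1 -> base_sign o d 0 = 1.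
  rewrite inE => /predU1P[-> | /mapP[mu mu_neg ->]] vd; first by rewrite mxE.
  rewrite mxE; case: eqP => // d_mu; move: mu_neg.
  by rewrite mem_enum inE -d_mu vd => /eqP; lra.
pose P := mean r (fun o => base_sign o *m (base_sign o)^T).
have Pfix : fixed sigma P by apply: fixed_mean => // o _; apply: fixed_base_cut.
have Pab : P a b = 1.
  apply: (convex_mean (P := fun M : 'M[R]_N => M a b = 1)) => //.
    by move=> X Y t Xab Yab _; rewrite !mxE Xab Yab; lra.
  by move=> o ro; rewrite mxE big_ord1 mxE (base1 o a) ?(base1 o b) ?mulr1.
have [e e_gt0 CleP] := mean_outer_dominates (isT : 0 < size r)%N v_comb.
by apply: (fixed_face_entry sigma_aff Pfix (elliptope_cut sv) e_gt0).
Qed.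

Lemma sigma_cut_same_sign v : signvec v ->
  forall a b, v a 0 = v b 0 -> sigma (v *m v^T) a b = 1.
Proof.
move=> sv a b; case: (sv a) => va vab.
  by apply: sigma_cut_entry1; rewrite -?vab.
have -> : v *m v^T = (- v) *m (- v)^T by rewrite linearN /= mulNmx mulmxN opprK.
by apply: sigma_cut_entry1 (signvecN sv) _ _; rewrite mxE -?vab va opprK.
Qed.

Lemma sigma_cut v : signvec v -> sigma (v *m v^T) = v *m v^T.
Proof.
move=> sv; have CG := elliptope_cut sv.
have [[a0 b0] /= /andP[/eqP va0 /eqP vb0] | no_cross] :=
  pickP (fun p : 'I_N * 'I_N => (v p.1 0 == 1) && (v p.2 0 == -1)); last first.
  suff -> : v *m v^T = A0 R N by [].
  apply/matrixP => a b; rewrite !mxE big_ord1 !mxE.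
  have := no_cross (a, b); have := no_cross (b, a) => /=.
  by case: (sv a) => ->; case: (sv b) => ->; rewrite ?eqxx //= => _ _; lra.
have := elliptope_cut_blocks sv (sigma_elliptope sigma_aff CG) va0 vb0
  (sigma_cut_same_sign sv).
set t := (1 + _) / 2 => sC.
have t01 : 0 <= t <= 1.
  have := elliptope_entry_bound a0 b0 (sigma_elliptope sigma_aff CG).
  by rewrite /t; lra.
have A0_fixed : fixed sigma (A0 R N).
  by split; rewrite // A0_cut; apply/elliptope_cut/signvec_const1.
have t0 : t = 0.
  apply: (sigma_segment_eq0 sigma_aff A0_fixed CG t01 sC (a := a0) (b := b0)).
    by rewrite mxE.
  by rewrite mxE big_ord1 !mxE va0 vb0 mul1r.
by rewrite sC t0 scale0r add0r subr0 scale1r.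
Qed.

Lemma fixed_pair_mx i j (c : R) : -1 <= c <= 1 -> fixed sigma (pair_mx i j c).
Proof.
have fixed_sign e : e = 1 \/ e = -1 -> fixed sigma (pair_mx i j e).
  move=> e_sign; rewrite pair_mx_mean //; apply: (fixed_mean sigma_aff) => [|s _].
    by rewrite -cardT; apply/card_gt0P; exists [ffun=> false].
  have sv := signvec_pair_sign i j s e_sign.
  by split; [apply: elliptope_cut | exact: sigma_cut].
move=> c_bound; rewrite pair_mx_convex.
apply: (fixed_convex sigma_aff); last by lra.
  by apply: fixed_sign; left.
by apply: fixed_sign; right.
Qed.

End FixedCuts.

Unset Implicit Arguments.
Set Strict Implicit.

Theorem lemma12 (R : realType) (N : nat) (sigma : 'M[R]_N -> 'M[R]_N) :
  affine_bijection_on sigma ->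
  sigma (A0 R N) = A0 R N ->
  (forall mu : 'I_N, sigma (Amu R mu) = Amu R mu) ->
  forall X : 'M[R]_N, elliptope X -> sigma X = X.
Proof.
move=> sigma_aff sigma_A0 sigma_Amu X XG.
have [N0 | N_gt0] := posnP N.
  by apply/matrixP => i; have : (i < 0)%N by rewrite -N0.
have fixed_pair := fixed_pair_mx sigma_aff sigma_A0 sigma_Amu.
set t : R := (N * N)%:R^-1.
have NN_gt0 : (0 < N * N)%N by rewrite muln_gt0 N_gt0.
have t_gt0 : 0 < t by rewrite invr_gt0 ltr0n.
have t01 : 0 <= t <= 1 by rewrite ltW //= invf_le1 ?ltr0n ?ler1n.
have [IG sigma_1] : fixed sigma 1%:M.
  by rewrite -(pair_mx0 _ (Ordinal N_gt0) (Ordinal N_gt0)); apply: fixed_pair; lra.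
have [_] : fixed sigma (t *: X + (1 - t) *: 1%:M).
  rewrite -mean_pair_mx //; apply: (fixed_mean sigma_aff) => [|[i j] _].
    by rewrite -cardT card_prod card_ord.
  by apply: fixed_pair; have := elliptope_entry_bound i j XG; lra.
rewrite sigma_convex // sigma_1 => /addIr.
exact/can_inj/scalerK/lt0r_neq0.
Qed.
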